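(* Let $G=(V,E)$ be a simple graph with adjacency matrix $A$, let $x$ be a solution of $\mathrm{LCP}(A+I,-\mathbf{e})$, and let $S$ be a maximal independent set of $G$ with $S\subseteq\sigma(x)$. Then $\mathbf{e}^\top x\leq |S|$.
   Context: $x$ solves $\mathrm{LCP}(A+I,-\mathbf{e})$ iff $x\geq 0$, $(A+I)x\geq\mathbf{e}$ and $x^\top((A+I)x-\mathbf{e})=0$, where $I$ is the identity and $\mathbf{e}$ the all-ones vector. $\sigma(x):=\{i\in V\mid x_i>0\}$ is the support of $x$. *)

From mathcomp Require Import all_boot all_order all_algebra.
Set Implicit Arguments. Unset Strict Implicit. Unset Printing Implicit Defensive.
Import Order.TTheory GRing.Theory Num.Theory.
Local Open Scope ring_scope.

Definition simple_graph n (e : rel 'I_n) : Prop :=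
  symmetric e /\ irreflexive e.

Definition adjmx (R : nzRingType) n (e : rel 'I_n) : 'M[R]_n :=
  \matrix_(i, j) (e i j)%:R.

Definition onesv (R : nzRingType) n : 'cV[R]_n := const_mx 1.

Definition LCP_sol (R : numDomainType) n (M : 'M[R]_n) (q x : 'cV[R]_n) : Prop :=
  (forall i, 0 <= x i 0) /\
  (forall i, 0 <= (M *m x + q) i 0) /\
  (x^T *m (M *m x + q)) 0 0 = 0.

Definition supp (R : numDomainType) n (x : 'cV[R]_n) : {set 'I_n} :=
  [set i | 0 < x i 0].

Definition independent n (e : rel 'I_n) (S : {set 'I_n}) : bool :=
  [forall i in S, forall j in S, ~~ e i j].

Definition maximal_independent n (e : rel 'I_n) (S : {set 'I_n}) : Prop :=
  independent e S /\
  (forall T : {set 'I_n}, independent e T -> S \subset T -> T = S).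

From mathcomp Require Import all_boot all_order all_algebra.
Set Implicit Arguments. Unset Strict Implicit. Unset Printing Implicit Defensive.
Import Order.TTheory GRing.Theory Num.Theory.
Local Open Scope ring_scope.

(* A maximal independent set S dominates the graph, so every x_v is bounded by
   the entry ((A + I) x)_s of some s in S; on S, which lies in the support of x,
   complementarity forces these entries to equal 1.  Summing over v gives
   e^T x <= sum_(s in S) ((A + I) x)_s = |S|. *)

Lemma independent_setU1 n (e : rel 'I_n) (S : {set 'I_n}) (v : 'I_n) :
  symmetric e -> irreflexive e -> independent e S ->
  (forall s, s \in S -> ~~ e s v) -> independent e (v |: S).
Proof.
move=> esym eirr indS noadj.
have indSP i j : i \in S -> j \in S -> ~~ e i j.
  by move=> iS jS; move/forallP/(_ i)/implyP/(_ iS)/forallP/(_ j)/implyP: indS; apply.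
apply/forallP => i; apply/implyP; rewrite in_setU1 => /predU1P [-> | iS];
  apply/forallP => j; apply/implyP; rewrite in_setU1 => /predU1P [-> | jS].
- by rewrite eirr.
- by rewrite esym noadj.
- exact: noadj.
- exact: indSP.
Qed.

Lemma maximal_independent_dominating n (e : rel 'I_n) (S : {set 'I_n}) :
  simple_graph e -> maximal_independent e S ->
  forall v, exists2 s, s \in S & (s == v) || e s v.
Proof.
move=> [esym eirr] [indS maxS] v.
have [vS | vNS] := boolP (v \in S); first by exists v; rewrite ?eqxx.
have [s /andP [sS esv] | noadj] := pickP [pred s | (s \in S) && e s v].
  by exists s; rewrite ?esv ?orbT.
have noadjS s : s \in S -> ~~ e s v by move=> sS; move: (noadj s); rewrite /= sS => /negbT.
have ext := maxS _ (independent_setU1 esym eirr indS noadjS) (subsetUr _ _).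
by move: vNS; rewrite -ext setU11.
Qed.

Lemma LCP_sol_supp (R : numDomainType) n (M : 'M[R]_n) (q x : 'cV[R]_n) i :
  LCP_sol M q x -> i \in supp x -> (M *m x + q) i 0 = 0.
Proof.
move=> [x_ge0 [y_ge0 compl]]; rewrite inE => xi_gt0.
move: compl; rewrite mxE => /eqP; rewrite psumr_eq0 => [|j _]; last first.
  by rewrite mxE mulr_ge0.
by move=> /allP/(_ i (mem_index_enum i)); rewrite /= mxE mulf_eq0 (gt_eqF xi_gt0) => /eqP.
Qed.

Lemma sum_le_sum_mulmx_dominating (R : numDomainType) n (M : 'M[R]_n)
    (x : 'cV[R]_n) (S : {set 'I_n}) :
  (forall i j, 0 <= M i j) -> (forall j, 0 <= x j 0) ->
  (forall j, exists2 s, s \in S & 1 <= M s j) ->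
  \sum_j x j 0 <= \sum_(s in S) (M *m x) s 0.
Proof.
move=> M_ge0 x_ge0 dom.
under [leRHS]eq_bigr => s _ do rewrite mxE.
rewrite exchange_big /=; apply: ler_sum => j _.
have [s sS Msj_ge1] := dom j.
rewrite (bigD1 s) //= -[leLHS]addr0 lerD //.
  by rewrite -[leLHS]mul1r ler_wpM2r.
by rewrite sumr_ge0 // => i _; rewrite mulr_ge0.
Qed.

Lemma adjmx_add1E (R : numDomainType) n (e : rel 'I_n) i j :
  (adjmx R e + 1%:M) i j = (e i j)%:R + (i == j)%:R.
Proof. by rewrite !mxE. Qed.

Lemma onesv_tr_mulmx (R : nzRingType) n (x : 'cV[R]_n) :
  ((onesv R n)^T *m x) 0 0 = \sum_j x j 0.
Proof. by rewrite mxE; apply: eq_bigr => j _; rewrite !mxE mul1r. Qed.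

Theorem lemma3 (R : realFieldType) (n : nat) (e : rel 'I_n) (x : 'cV[R]_n)
  (S : {set 'I_n}) :
  simple_graph e ->
  LCP_sol (adjmx R e + 1%:M) (- onesv R n) x ->
  maximal_independent e S ->
  S \subset supp x ->
  ((onesv R n)^T *m x) 0 0 <= #|S|%:R.
Proof.
move=> Gsimple sol Smax Ssupp; set M := adjmx R e + 1%:M.
have M_ge0 i j : 0 <= M i j by rewrite adjmx_add1E addr_ge0.
have dom j : exists2 s, s \in S & 1 <= M s j.
  have [s sS /orP adj] := maximal_independent_dominating Gsimple Smax j.
  exists s => //; rewrite adjmx_add1E.
  by case: adj => ->; rewrite ?lerDr ?lerDl.
have MxS s : s \in S -> (M *m x) s 0 = 1.
  move=> sS; apply/eqP; rewrite -subr_eq0.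
  by move: (LCP_sol_supp sol (subsetP Ssupp s sS)); rewrite !mxE => ->.
have [x_ge0 _] := sol.
rewrite onesv_tr_mulmx (le_trans (sum_le_sum_mulmx_dominating M_ge0 x_ge0 dom)) //.
by rewrite (eq_bigr _ MxS) sumr_const.
Qed.
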